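(* Let $k\in\mathbb N$ and let $f:\Xi_k\to\mathbb R$ satisfy $\mathfrak a^\dagger_{k-1}f=0$. Then $$\mathcal E_{\alpha,k}(f)\ge k\Big(\inf_{\xi\in\Xi_{k-1}}\mathrm{gap}_{\rm RW}(\alpha+\xi)\Big)\,\mathrm{Var}_{\alpha,k}(f).$$
   Context: $V$ is a finite set with symmetric non-negative weights $c_{xy}=c_{yx}\ge0$ forming a connected graph, $\alpha=(\alpha_x)_{x\in V}$ positive, $|\alpha|=\sum_x\alpha_x$. $\Xi_k:=\{\eta\in\mathbb N_0^V:\sum_x\eta_x=k\}$. $\mu_{\alpha,k}(\eta)\propto\prod_x\frac{\Gamma(\alpha_x+\eta_x)}{\Gamma(\alpha_x)\eta_x!}$ is a probability on $\Xi_k$, $\langle f,g\rangle_{\alpha,k}=\sum_\eta\mu_{\alpha,k}(\eta)f(\eta)g(\eta)$, $\mathrm{Var}_{\alpha,k}(f)=\langle f,f\rangle_{\alpha,k}-\langle f,1\rangle_{\alpha,k}^2$. $L_kf(\eta)=\sum_x\eta_x\sum_yc_{xy}(\alpha_y+\eta_y)(f(\eta-\delta_x+\delta_y)-f(\eta))$ ($\eta-\delta_x+\delta_y$: move a particle from $x$ to $y$) and $\mathcal E_{\alpha,k}(f)=\langle f,-L_kf\rangle_{\alpha,k}$. The creation operator is $\mathfrak a^\dagger_{k-1}f(\xi)=\sum_x(\xi_x+\alpha_x)f(\xi+\delta_x)$ for $\xi\in\Xi_{k-1}$. For any positive weight vector $\beta=(\beta_x)_{x\in V}$, $\mathrm{gap}_{\rm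 RW}(\beta)$ is the smallest nonzero eigenvalue of $-A_\beta$, where $A_\beta\phi(x)=\sum_yc_{xy}\beta_y(\phi(y)-\phi(x))$; here $\alpha+\xi$ is the vector $(\alpha_x+\xi_x)_{x\in V}$. *)

From HB Require Import structures.
From mathcomp Require Import all_boot all_order all_algebra.
From mathcomp Require Import boolp classical_sets reals.
Set Implicit Arguments. Unset Strict Implicit. Unset Printing Implicit Defensive.
Import Order.TTheory GRing.Theory Num.Theory.
Local Open Scope ring_scope.

Section Defs.
Variables (R : realType) (V : finType).

Definition conf := {ffun V -> nat}.

Definition nparts (eta : conf) : nat := (\sum_x eta x)%N.

(* sum of F over Xi_k = {eta | sum_x eta_x = k}, enumerated via the finite
   type of configurations bounded by k (a bijection onto Xi_k) *)
Definition sumXi (k : nat) (F : conf -> R) : R :=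
  \sum_(e : {ffun V -> 'I_k.+1} | (\sum_x (e x : nat) == k)%N)
     F [ffun x => (e x : nat)].

Definition move (eta : conf) (x y : V) : conf :=
  [ffun z => (eta z - (z == x) + (z == y))%N].
Definition add1 (xi : conf) (x : V) : conf := [ffun z => (xi z + (z == x))%N].

(* Gamma(a + n) / Gamma(a) = a (a+1) ... (a+n-1)  (rising factorial) *)
Definition rising (a : R) (n : nat) : R := \prod_(i < n) (a + i%:R).

Variables (c : V -> V -> R) (alpha : V -> R).

(* unnormalized weight prod_x Gamma(alpha_x + eta_x) / (Gamma(alpha_x) eta_x!) *)
Definition weight (eta : conf) : R :=
  \prod_x (rising (alpha x) (eta x) / (eta x)`!%:R).

Definition mu (k : nat) (eta : conf) : R := weight eta / sumXi k weight.

Definition inner (k : nat) (f g : conf -> R) : R :=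
  sumXi k (fun eta => mu k eta * f eta * g eta).

Definition Var (k : nat) (f : conf -> R) : R :=
  inner k f f - (inner k f (fun _ => 1)) ^+ 2.

Definition gen (f : conf -> R) (eta : conf) : R :=
  \sum_x (eta x)%:R * \sum_y c x y * (alpha y + (eta y)%:R)
                         * (f (move eta x y) - f eta).

Definition energy (k : nat) (f : conf -> R) : R :=
  inner k f (fun eta => - gen f eta).

Definition creation (f : conf -> R) (xi : conf) : R :=
  \sum_x ((xi x)%:R + alpha x) * f (add1 xi x).

Definition Arw (beta : V -> R) (phi : V -> R) (x : V) : R :=
  \sum_y c x y * beta y * (phi y - phi x).

Definition eig_negA (beta : V -> R) (lam : R) : Prop :=
  exists phi : V -> R, (exists x, phi x != 0) /\
    forall x, - Arw beta phi x = lam * phi x.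

Definition gapRW (beta : V -> R) : R :=
  inf [set lam | eig_negA beta lam /\ lam != 0].

Definition connected_graph : Prop :=
  forall x y : V, connect (fun u v => c u v != 0) x y.

End Defs.

From HB Require Import structures.
From mathcomp Require Import all_boot all_order all_algebra.
From mathcomp Require Import boolp classical_sets reals.
From mathcomp Require Import complex ring.
Import Order.TTheory GRing.Theory Num.Theory.
Local Open Scope ring_scope.
Local Open Scope classical_set_scope.

Set Implicit Arguments.
Unset Strict Implicit.
Unset Printing Implicit Defensive.

(* Every eta in Xi_k is xi + delta_x for exactly eta_x pairs (xi, x) with xi in
   Xi_(k-1), and w(xi + delta_x) (xi_x + 1) = w(xi) (alpha_x + xi_x) for the
   unnormalized weight w, so that
     k sum_(Xi_k) w F = sum_(xi in Xi_(k-1)) w(xi) sum_x (alpha_x + xi_x) F(xi + delta_x).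
   Under this reindexing the hypothesis on f says that u_xi := f(xi + delta_.) has
   mean zero for the weights alpha + xi, and the energy becomes the average over xi
   of the Dirichlet form of the random walk A_(alpha + xi) at u_xi.  The Poincare
   inequality of that reversible walk, a consequence of the spectral theorem for
   its symmetrized generator, bounds each term by gap_RW(alpha + xi) times the
   (alpha + xi)-weighted square norm of u_xi. *)

Section SymmetricForms.
Local Open Scope sesquilinear_scope.

Lemma hermitian_form_ge (C : numClosedFieldType) n (A : 'M[C]_n) (g : C)
    (psi : 'rV[C]_n) :
  A \is hermsymmx ->
  (forall (l : C) (v : 'rV_n),
     v != 0 -> v *m A = l *: v -> l \is Num.real -> l != 0 -> g <= l) ->
  (forall v : 'rV_n, v *m A = 0 -> (v *m psi^t*) 0 0 = 0) ->
  g * (psi *m psi^t*) 0 0 <= (psi *m A *m psi^t*) 0 0.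
Proof.
(* Expand psi in the orthonormal eigenbasis formed by the rows of the spectral
   matrix; its components along eigenvalue 0 vanish by the kernel hypothesis. *)
move=> Aherm g_le psi_ker.
have /orthomx_spectralP := hermitian_normalmx Aherm.
have dreal := hermitian_spectral_diag_real Aherm.
set P := spectralmx A; set d := spectral_diag A.
have Pu : P \is unitarymx := spectral_unitarymx A.
rewrite invmx_unitary // => AE.
have PA : P *m A = diag_mx d *m P.
  by rewrite AE !mulmxA (unitarymxP Pu) mul1mx.
have eigen j : row j P *m A = d 0 j *: row j P.
  by apply/rowP => k; rewrite -row_mul PA mul_diag_mx !mxE.
have row_neq0 j : row j P != 0.
  apply/eqP => Pj0.
  have : (row j P *m P^t*) 0 j = 1 by rewrite -row_mul (unitarymxP Pu) !mxE eqxx.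
  by rewrite Pj0 mul0mx mxE => /eqP; rewrite eq_sym oner_eq0.
set w := psi *m P^t*.
have psiE : psi = w *m P by rewrite /w mulmxKtV.
have wE j : (w 0 j)^* = (row j P *m psi^t*) 0 0.
  rewrite !mxE rmorph_sum; apply: eq_bigr => k _.
  by rewrite !mxE rmorphM /= conjCK mulrC.
clearbody w.
have norm_psi : (psi *m psi^t*) 0 0 = \sum_j w 0 j * (w 0 j)^*.
  rewrite psiE trmx_mul map_mxM mulmxA mulmxtVK // mxE.
  by apply: eq_bigr => j _; rewrite !mxE.
have form_psi : (psi *m A *m psi^t*) 0 0 = \sum_j d 0 j * (w 0 j * (w 0 j)^*).
  rewrite psiE AE !trmx_mul !map_mxM !mulmxA mulmxtVK // mul_mx_diag.
  rewrite -(mulmxA _ P) (unitarymxP Pu) mulmx1 mxE.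
  by apply: eq_bigr => j _; rewrite !mxE mulrCA mulrA.
rewrite norm_psi form_psi mulr_sumr; apply: ler_sum => j _.
have [dj0|dj_neq0] := eqVneq (d 0 j) 0.
  have -> : (w 0 j)^* = 0 by rewrite wE psi_ker // eigen dj0 scale0r.
  by rewrite !mulr0.
apply: ler_wpM2r; first exact: mul_conjC_ge0.
exact: g_le (row_neq0 j) (eigen j) (mxOverP dreal 0 j) dj_neq0.
Qed.

Local Open Scope complex_scope.
Variable R : rcfType.
Local Notation toC := (map_mx (real_complex R)).
Local Notation mxRe := (map_mx (@complex.Re R)).
Local Notation mxIm := (map_mx (@complex.Im R)).

Lemma Re_sum I r (P : pred I) (F : I -> R[i]) :
  complex.Re (\sum_(i <- r | P i) F i) = \sum_(i <- r | P i) complex.Re (F i).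
Proof. exact: (raddf_sum (@complex.Re R : Rcomplex R -> R)). Qed.

Lemma Im_sum I r (P : pred I) (F : I -> R[i]) :
  complex.Im (\sum_(i <- r | P i) F i) = \sum_(i <- r | P i) complex.Im (F i).
Proof. exact: (raddf_sum (@complex.Im R : Rcomplex R -> R)). Qed.

Lemma Re_mul_real (z : R[i]) (b : R) : complex.Re (z * b%:C) = complex.Re z * b.
Proof. by case: z => x y /=; rewrite mulr0 subr0. Qed.

Lemma Im_mul_real (z : R[i]) (b : R) : complex.Im (z * b%:C) = complex.Im z * b.
Proof. by case: z => x y /=; rewrite mulr0 add0r. Qed.

Lemma map_Re_mulmx m n p (A : 'M[R[i]]_(m, n)) (B : 'M[R]_(n, p)) :
  mxRe (A *m toC B) = mxRe A *m B.
Proof.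
apply/matrixP => i j; rewrite !mxE Re_sum.
by apply: eq_bigr => k _; rewrite !mxE Re_mul_real.
Qed.

Lemma map_Im_mulmx m n p (A : 'M[R[i]]_(m, n)) (B : 'M[R]_(n, p)) :
  mxIm (A *m toC B) = mxIm A *m B.
Proof.
apply/matrixP => i j; rewrite !mxE Im_sum.
by apply: eq_bigr => k _; rewrite !mxE Im_mul_real.
Qed.

Lemma real_eigenvector n (S : 'M[R]_n) (l : R) (v : 'rV[R[i]]_n) :
  v != 0 -> v *m toC S = l%:C *: v -> exists2 u : 'rV[R]_n, u != 0 & u *m S = l *: u.
Proof.
move=> v_neq0 hv.
have eigRe : mxRe v *m S = l *: mxRe v.
  by rewrite -map_Re_mulmx hv; apply/matrixP => i j; rewrite !mxE mulrC Re_mul_real mulrC.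
have eigIm : mxIm v *m S = l *: mxIm v.
  by rewrite -map_Im_mulmx hv; apply/matrixP => i j; rewrite !mxE mulrC Im_mul_real mulrC.
have [Re0|] := eqVneq (mxRe v) 0; last by exists (mxRe v).
have [Im0|] := eqVneq (mxIm v) 0; last by exists (mxIm v).
suff v0 : v = 0 by rewrite v0 eqxx in v_neq0.
apply/matrixP => i j; move/matrixP: Re0 => /(_ i j); move/matrixP: Im0 => /(_ i j).
by rewrite !mxE; case: (v i j) => x y /= -> ->.
Qed.

Lemma symmetric_form_ge n (S : 'M[R]_n) (g : R) (psi : 'rV[R]_n) :
  S^T = S ->
  (forall (l : R) (v : 'rV_n), v != 0 -> v *m S = l *: v -> l != 0 -> g <= l) ->
  (forall v : 'rV_n, v *m S = 0 -> (v *m psi^T) 0 0 = 0) ->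
  g * (psi *m psi^T) 0 0 <= (psi *m S *m psi^T) 0 0.
Proof.
move=> Ssym g_le psi_ker.
have toC_tr m (u : 'rV[R]_m) : (toC u)^t* = (toC u)^T.
  by apply/matrixP => i j; rewrite !mxE conj_Creal //; apply/complex_realP; eexists.
have dotC (u v : 'rV[R]_n) : ((u *m v^T) 0 0)%:C = (toC u *m (toC v)^t*) 0 0.
  by rewrite toC_tr map_trmx -map_mxM [RHS]mxE.
have toC_eq0 (z : R[i]) : complex.Re z = 0 -> complex.Im z = 0 -> z = 0.
  by move=> Re0 Im0; rewrite [z]complexE Re0 Im0 mulr0 addr0.
rewrite -lecR rmorphM /= !dotC map_mxM.
apply: hermitian_form_ge.
- apply: realsym_hermsym.
    by apply/is_hermitianmxP; rewrite expr0 scale1r map_mx_id // map_trmx Ssym.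
  by apply/mxOverP => i j; rewrite mxE; apply/complex_realP; eexists.
- move=> z v v_neq0 hv /complex_realP [l zE]; subst z; rewrite lecR => l_neq0.
  have [u u_neq0 hu] := real_eigenvector v_neq0 hv.
  by apply: g_le u_neq0 hu _; apply: contraNneq l_neq0 => ->.
- move=> v hv; rewrite toC_tr map_trmx.
  have kerRe : mxRe v *m S = 0 by rewrite -map_Re_mulmx hv map_mx0.
  have kerIm : mxIm v *m S = 0 by rewrite -map_Im_mulmx hv map_mx0.
  apply: toC_eq0.
    by have := psi_ker _ kerRe; rewrite -map_Re_mulmx [X in X = _ -> _]mxE.
  by have := psi_ker _ kerIm; rewrite -map_Im_mulmx [X in X = _ -> _]mxE.
Qed.
End SymmetricForms.

Section Configurations.
Variable V : finType.
Implicit Types (eta xi : conf V) (k : nat) (x y : V).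

Definition confs k : seq (conf V) :=
  [seq [ffun x => (e x : nat)] | e : {ffun V -> 'I_k.+1} <-
     enum [pred e : {ffun V -> 'I_k.+1} | (\sum_x (e x : nat) == k)%N]].

Lemma sumXiE (R : realType) k (F : conf V -> R) :
  sumXi k F = \sum_(eta <- confs k) F eta.
Proof. by rewrite /sumXi big_map big_enum; apply: eq_bigl => e; rewrite inE. Qed.

Lemma confs_uniq k : uniq (confs k).
Proof.
rewrite map_inj_uniq ?enum_uniq // => e e' /ffunP ee'.
by apply/ffunP => x; apply: val_inj; have := ee' x; rewrite !ffunE.
Qed.

Lemma leq_nparts eta x : (eta x <= nparts eta)%N.
Proof. by rewrite /nparts (bigD1 x) //= leq_addr. Qed.

Lemma mem_confs k eta : (eta \in confs k) = (nparts eta == k).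
Proof.
apply/mapP/idP => [[e]|/eqP <-].
  rewrite mem_enum inE => /eqP e_k ->; rewrite /nparts -[X in _ == X]e_k.
  by apply/eqP/eq_bigr => x _; rewrite ffunE.
have eta_lt x : (eta x < (nparts eta).+1)%N by rewrite ltnS leq_nparts.
exists [ffun x => Ordinal (eta_lt x)]; last by apply/ffunP => x; rewrite !ffunE.
by rewrite mem_enum inE; apply/eqP/eq_bigr => x _; rewrite ffunE.
Qed.

Lemma add1E xi x y : add1 xi x y = (xi y + (y == x))%N.
Proof. by rewrite ffunE. Qed.

Lemma nparts_add1 xi x : nparts (add1 xi x) = (nparts xi).+1.
Proof.
rewrite /nparts; under eq_bigr do rewrite add1E.
rewrite big_split /= -addn1; congr addn.
by rewrite (bigD1 x) //= eqxx big1 => [|z /negbTE ->].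
Qed.

Lemma add1_inj x : injective (fun xi => add1 xi x).
Proof. by move=> xi xi' /ffunP eq; apply/ffunP => z; have := eq z; rewrite !add1E => /addIn. Qed.

Lemma move_add1 xi x y : move (add1 xi x) x y = add1 xi y.
Proof. by apply/ffunP => z; rewrite !ffunE addnK. Qed.

Lemma add1_neq xi x y : y != x -> add1 xi x y = xi y.
Proof. by move=> /negbTE yx; rewrite add1E yx addn0. Qed.

Lemma sum_confs_add1 (R : nmodType) k x (G : conf V -> R) :
  \sum_(eta <- confs k.+1 | (0 < eta x)%N) G eta = \sum_(xi <- confs k) G (add1 xi x).
Proof.
rewrite -big_filter -(big_map (fun xi => add1 xi x) xpredT); apply: perm_big.
apply: uniq_perm; first by rewrite filter_uniq // confs_uniq.
  by rewrite map_inj_uniq ?confs_uniq //; exact: add1_inj.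
move=> eta; rewrite mem_filter mem_confs; apply/andP/mapP => [[eta_x /eqP eta_k]|].
  pose xi := [ffun z => (eta z - (z == x))%N].
  have eta_add1 : eta = add1 xi x.
    apply/ffunP => z; rewrite add1E ffunE.
    by case: eqVneq => [->|_]; rewrite ?subn0 ?addn0 // subnK.
  by exists xi; rewrite // mem_confs -eqSS -(nparts_add1 xi x) -eta_add1 eta_k.
by case=> xi; rewrite mem_confs => /eqP xi_k ->; rewrite add1E eqxx addn1 nparts_add1 xi_k.
Qed.

End Configurations.

Section Poincare.
Variables (R : realType) (V : finType) (c : V -> V -> R) (beta : V -> R).
Hypotheses (c_sym : forall x y, c x y = c y x) (c_ge0 : forall x y, 0 <= c x y)
  (c_conn : connected_graph c) (beta_gt0 : forall x, 0 < beta x).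

Definition dirichlet (u : V -> R) : R := \sum_x beta x * u x * - Arw c beta u x.

Lemma oppArwE u x : - Arw c beta u x = \sum_y c x y * beta y * (u x - u y).
Proof. by rewrite /Arw -sumrN; apply: eq_bigr => y _; rewrite -mulrN opprB. Qed.

Lemma dirichlet_sym u :
  dirichlet u *+ 2 = \sum_x \sum_y beta x * c x y * beta y * (u x - u y) ^+ 2.
Proof.
have D1 : dirichlet u = \sum_x \sum_y beta x * c x y * beta y * (u x * (u x - u y)).
  apply: eq_bigr => x _; rewrite oppArwE mulr_sumr.
  by apply: eq_bigr => y _; ring.
have D2 : dirichlet u = \sum_x \sum_y beta x * c x y * beta y * (u y * (u y - u x)).
  rewrite D1 exchange_big; apply: eq_bigr => x _; apply: eq_bigr => y _.
  by rewrite (c_sym y x); ring.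
rewrite mulr2n {1}D1 D2 -big_split; apply: eq_bigr => x _.
by rewrite -big_split; apply: eq_bigr => y _ /=; ring.
Qed.

Lemma dirichlet_term_ge0 u x y : 0 <= beta x * c x y * beta y * (u x - u y) ^+ 2.
Proof.
apply: mulr_ge0; last exact: sqr_ge0.
by apply: mulr_ge0; [apply: mulr_ge0|]; rewrite ?c_ge0 ?ltW.
Qed.

Lemma dirichlet_ge0 u : 0 <= dirichlet u.
Proof.
rewrite -(pmulrn_lge0 _ (isT : (0 < 2)%N)) dirichlet_sym.
by apply: sumr_ge0 => x _; apply: sumr_ge0 => y _; exact: dirichlet_term_ge0.
Qed.

Lemma dirichlet_eq0 u : dirichlet u = 0 -> forall x y, u x = u y.
Proof.
move=> D0.
have edge x y : c x y != 0 -> u x = u y.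
  move=> cxy_neq0.
  have /eqP : \sum_x \sum_y beta x * c x y * beta y * (u x - u y) ^+ 2 = 0.
    by rewrite -dirichlet_sym D0 mul0rn.
  rewrite psumr_eq0 => [/allP/(_ x (mem_index_enum x))|x' _]; last first.
    by apply: sumr_ge0 => y' _; exact: dirichlet_term_ge0.
  rewrite psumr_eq0 => [/allP/(_ y (mem_index_enum y))|y' _]; last first.
    exact: dirichlet_term_ge0.
  rewrite !mulf_eq0 (negbTE cxy_neq0) !(gt_eqF (beta_gt0 _)) /= orbb.
  by rewrite subr_eq0 => /eqP.
move=> x y.
have closed_level : closed (fun a b => c a b != 0) [pred z | u z == u x].
  by move=> a b /edge uab; rewrite !inE uab.
by have := closed_connect closed_level (c_conn x y); rewrite !inE eqxx => /esym/eqP.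
Qed.

Lemma eig_negA_ge0 l : eig_negA c beta l -> 0 <= l.
Proof.
case=> phi [[x0 phix0_neq0] eig].
have norm_gt0 : 0 < \sum_x beta x * phi x ^+ 2.
  rewrite (bigD1 x0) //= ltr_pwDl //.
    by rewrite mulr_gt0 // exprn_even_gt0.
  by apply: sumr_ge0 => y _; rewrite mulr_ge0 ?sqr_ge0 ?ltW.
rewrite -(pmulr_lge0 _ norm_gt0) mulr_sumr.
have := dirichlet_ge0 phi; congr (_ <= _).
by apply: eq_bigr => x _; rewrite eig; ring.
Qed.

Lemma gapRW_ge0 : 0 <= gapRW c beta.
Proof.
rewrite /gapRW; set E := [set l | _].
have [->|/set0P nonempty] := eqVneq E set0; first by rewrite inf0.
by apply: lb_le_inf => // l [/eig_negA_ge0].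
Qed.

Lemma gapRW_le l : eig_negA c beta l -> l != 0 -> gapRW c beta <= l.
Proof.
by move=> eig l_neq0; apply: ge_inf => //; exists 0 => m [/eig_negA_ge0].
Qed.

Local Notation sb x := (Num.sqrt (beta x)).
Local Notation ev := (@enum_val V _).

Lemma sb_neq0 x : sb x != 0.
Proof. by rewrite gt_eqF // sqrtr_gt0. Qed.

Lemma sbK x : sb x * sb x = beta x.
Proof. by rewrite -expr2 sqr_sqrtr // ltW. Qed.

(* The matrix of [- Arw c beta] conjugated by diag(sb x), acting on row vectors;
   it is symmetric because beta is reversible for the walk. *)
Definition sym_gen : 'M[R]_#|V| := \matrix_(i, j)
  ((ev i == ev j)%:R * \sum_y c (ev i) y * beta y - sb (ev i) * c (ev i) (ev j) * sb (ev j)).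

Definition sqrt_row (u : V -> R) : 'rV[R]_#|V| := \row_i (sb (ev i) * u (ev i)).

Lemma sym_gen_sym : sym_gen^T = sym_gen.
Proof.
apply/matrixP => i j; rewrite !mxE (c_sym (ev j)) eq_sym.
by case: eqVneq => [->|_]; rewrite ?mul0r; ring.
Qed.

Lemma sqrt_row_inj : injective sqrt_row.
Proof.
move=> u w /rowP uw; apply/funext => x.
by have := uw (enum_rank x); rewrite !mxE enum_rankK => /(mulfI (sb_neq0 x)).
Qed.

Lemma sqrt_rowZ l u : l *: sqrt_row u = sqrt_row (fun x => l * u x).
Proof. by apply/rowP => i; rewrite !mxE mulrCA. Qed.

Lemma sqrt_row_surj (v : 'rV[R]_#|V|) :
  v = sqrt_row (fun x => v 0 (enum_rank x) / sb x).
Proof. by apply/rowP => i; rewrite !mxE enum_valK mulrC divfK ?sb_neq0. Qed.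

Lemma sum_enum_val (F : V -> R) : \sum_(i < #|V|) F (ev i) = \sum_x F x.
Proof. by rewrite [RHS]big_enum_val. Qed.

Lemma sqrt_row_dot u w : (sqrt_row u *m (sqrt_row w)^T) 0 0 = \sum_x beta x * u x * w x.
Proof.
rewrite mxE -sum_enum_val; apply: eq_bigr => i _.
by rewrite !mxE mulrACA sbK mulrA.
Qed.

Lemma sqrt_row_mulmx u : sqrt_row u *m sym_gen = sqrt_row (fun x => - Arw c beta u x).
Proof.
apply/rowP => j; rewrite !mxE.
set z := ev j.
transitivity (\sum_x sb x * u x *
    ((x == z)%:R * \sum_y c x y * beta y - sb x * c x z * sb z)).
  by rewrite -sum_enum_val; apply: eq_bigr => i _; rewrite !mxE.
rewrite oppArwE; under eq_bigr do rewrite mulrBr.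
rewrite sumrB [X in X - _](bigD1 z) //= eqxx mul1r.
rewrite [X in _ + X - _]big1 ?addr0 => [|x /negbTE ->]; last by rewrite mul0r mulr0.
rewrite !mulr_sumr -sumrB; apply: eq_bigr => y _.
rewrite (c_sym y z); move: (sbK y); set s := sb y => <-; ring.
Qed.

Lemma sqrt_row0 : sqrt_row (fun _ => 0) = 0.
Proof. by apply/rowP => i; rewrite !mxE mulr0. Qed.

Lemma poincare phi :
  \sum_x beta x * phi x = 0 ->
  gapRW c beta * \sum_x beta x * phi x ^+ 2 <= dirichlet phi.
Proof.
move=> phi_mean0.
have -> : \sum_x beta x * phi x ^+ 2 = \sum_x beta x * phi x * phi x.
  by apply: eq_bigr => x _; rewrite expr2 mulrA.
have -> : dirichlet phi = \sum_x beta x * - Arw c beta phi x * phi x.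
  by apply: eq_bigr => x _; rewrite mulrAC.
rewrite -!sqrt_row_dot -sqrt_row_mulmx; apply: symmetric_form_ge sym_gen_sym _ _.
- move=> l v v_neq0.
  set u := fun x => v 0 (enum_rank x) / sb x.
  have vE : v = sqrt_row u := sqrt_row_surj v.
  rewrite vE sqrt_row_mulmx sqrt_rowZ => /sqrt_row_inj eig l_neq0.
  apply: gapRW_le l_neq0; exists u; split; last by move=> x; exact: (congr1 (@^~ x) eig).
  case: (pickP (fun x => u x != 0)) => [x ux_neq0|u0]; first by exists x.
  suff u_eq0 : u = (fun _ => 0) by rewrite vE u_eq0 sqrt_row0 eqxx in v_neq0.
  by apply/funext => x; have /negbFE/eqP := u0 x.
move=> v; set u := fun x => v 0 (enum_rank x) / sb x.
rewrite (sqrt_row_surj v) -/u sqrt_row_mulmx sqrt_row_dot -sqrt_row0.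
move=> /sqrt_row_inj Au0.
have /dirichlet_eq0 u_const : dirichlet u = 0.
  by rewrite /dirichlet big1 // => x _; rewrite (congr1 (@^~ x) Au0) mulr0.
case: (pickP (@predT V)) => [x0 _|V0]; last by rewrite big_pred0.
transitivity (u x0 * \sum_x beta x * phi x); last by rewrite phi_mean0 mulr0.
by rewrite mulr_sumr; apply: eq_bigr => x _; rewrite (u_const x x0) mulrAC mulrC.
Qed.
End Poincare.

Lemma rising_gt0 (R : realType) (a : R) n : 0 < a -> 0 < rising a n.
Proof. by move=> a_gt0; apply: prodr_gt0 => i _; rewrite ltr_wpDr. Qed.

Section Weights.
Variables (R : realType) (V : finType) (alpha : V -> R).
Hypothesis alpha_gt0 : forall x, 0 < alpha x.
Implicit Types (eta xi : conf V) (x : V).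

Definition alpha_shift xi x : R := alpha x + (xi x)%:R.

Lemma alpha_shift_gt0 xi x : 0 < alpha_shift xi x.
Proof. by rewrite ltr_wpDr. Qed.

Lemma weight_ge0 eta : 0 <= weight alpha eta.
Proof.
apply: prodr_ge0 => x _; rewrite divr_ge0 //.
exact/ltW/rising_gt0.
Qed.

Lemma weight_add1 xi x :
  weight alpha (add1 xi x) * (xi x).+1%:R = weight alpha xi * alpha_shift xi x.
Proof.
rewrite /weight (bigD1 x) //= [in RHS](bigD1 x) //= add1E eqxx addn1.
under eq_bigr => z /negbTE zx do rewrite add1E zx addn0.
rewrite /rising big_ord_recr /= factS natrM /alpha_shift.
have n_neq0 : (xi x).+1%:R != 0 :> R by rewrite pnatr_eq0.
have fact_neq0 : (xi x)`!%:R != 0 :> R by rewrite pnatr_eq0 -lt0n fact_gt0.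
by field; rewrite fact_neq0 nat1r n_neq0.
Qed.

Lemma reindex_add1 k (H : conf V -> V -> R) :
  \sum_(eta <- confs V k.+1) \sum_x (eta x)%:R * weight alpha eta * H eta x =
  \sum_(xi <- confs V k) \sum_x weight alpha xi * alpha_shift xi x * H (add1 xi x) x.
Proof.
rewrite exchange_big [RHS]exchange_big; apply: eq_bigr => x _.
rewrite (bigID (fun eta : conf V => (0 < eta x)%N)) /= [X in _ + X]big1 => [|eta].
  rewrite addr0 sum_confs_add1; apply: eq_bigr => xi _.
  by rewrite -weight_add1 (add1E xi x x) eqxx addn1 [_ * weight _ _]mulrC.
by rewrite -eqn0Ngt => /eqP ->; rewrite !mul0r.
Qed.

Lemma sum_confs_scale k (F : conf V -> R) :
  k.+1%:R * \sum_(eta <- confs V k.+1) weight alpha eta * F eta =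
  \sum_(xi <- confs V k) \sum_x weight alpha xi * alpha_shift xi x * F (add1 xi x).
Proof.
rewrite -(reindex_add1 k (fun eta _ => F eta)) mulr_sumr !big_seq.
apply: eq_bigr => eta; rewrite mem_confs => /eqP eta_k.
by rewrite -!mulr_suml -natr_sum -/(nparts eta) eta_k mulrA.
Qed.

End Weights.

Section Level.
Variables (R : realType) (V : finType) (c : V -> V -> R) (alpha : V -> R).
Variables (k : nat) (f : conf V -> R).
Local Notation w := (weight alpha).
Local Notation Z := (sumXi k.+1 w).

Lemma inner_confsE g :
  inner alpha k.+1 f g = Z^-1 * \sum_(eta <- confs V k.+1) w eta * (f eta * g eta).
Proof.
rewrite /inner /mu sumXiE mulr_sumr; apply: eq_bigr => eta _.
by rewrite /=; ring.
Qed.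

Lemma creationE xi : creation alpha f xi = \sum_x alpha_shift alpha xi x * f (add1 xi x).
Proof. by apply: eq_bigr => x _; rewrite addrC. Qed.

Lemma sum_confs_creation :
  k.+1%:R * \sum_(eta <- confs V k.+1) w eta * f eta =
  \sum_(xi <- confs V k) w xi * creation alpha f xi.
Proof.
rewrite sum_confs_scale; apply: eq_bigr => xi _.
by rewrite creationE mulr_sumr; apply: eq_bigr => x _; rewrite mulrA.
Qed.

Lemma sum_confs_mean0 :
  (forall xi : conf V, nparts xi = k -> creation alpha f xi = 0) ->
  \sum_(eta <- confs V k.+1) w eta * f eta = 0.
Proof.
move=> hf.
have : k.+1%:R * \sum_(eta <- confs V k.+1) w eta * f eta = 0.
  rewrite sum_confs_creation big_seq big1 // => xi.
  by rewrite mem_confs => /eqP/hf ->; rewrite mulr0.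
by move/eqP; rewrite mulf_eq0 pnatr_eq0 => /eqP.
Qed.

Lemma sum_confs_sqr :
  k.+1%:R * \sum_(eta <- confs V k.+1) w eta * f eta ^+ 2 =
  \sum_(xi <- confs V k) w xi * \sum_x alpha_shift alpha xi x * f (add1 xi x) ^+ 2.
Proof.
rewrite sum_confs_scale; apply: eq_bigr => xi _; rewrite mulr_sumr.
by apply: eq_bigr => x _; rewrite mulrA.
Qed.

Lemma Var_confsE :
  \sum_(eta <- confs V k.+1) w eta * f eta = 0 ->
  Var alpha k.+1 f = Z^-1 * \sum_(eta <- confs V k.+1) w eta * f eta ^+ 2.
Proof.
move=> mean0; rewrite /Var !inner_confsE.
under [X in _ - (_ * X) ^+ 2]eq_bigr do rewrite mulr1.
by rewrite mean0 mulr0 expr0n subr0; under eq_bigr do rewrite -expr2.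
Qed.

Lemma oppgenE eta : - gen c alpha f eta =
  \sum_x (eta x)%:R * \sum_y c x y * (alpha y + (eta y)%:R) * (f eta - f (move eta x y)).
Proof.
rewrite /gen -sumrN; apply: eq_bigr => x _; rewrite -mulrN -sumrN.
by congr (_ * _); apply: eq_bigr => y _; rewrite -mulrN opprB.
Qed.

Lemma energy_confsE :
  energy c alpha k.+1 f = Z^-1 * \sum_(xi <- confs V k)
    w xi * dirichlet c (alpha_shift alpha xi) (fun x => f (add1 xi x)).
Proof.
rewrite /energy inner_confsE; congr (_ * _).
pose S (eta : conf V) (x : V) :=
  \sum_y c x y * (alpha y + (eta y)%:R) * (f eta - f (move eta x y)).
transitivity (\sum_(eta <- confs V k.+1) \sum_x (eta x)%:R * w eta * (f eta * S eta x)).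
  apply: eq_bigr => eta _; rewrite oppgenE !mulr_sumr.
  by apply: eq_bigr => x _; rewrite /S; ring.
rewrite reindex_add1; apply: eq_bigr => xi _; rewrite mulr_sumr.
apply: eq_bigr => x _; rewrite oppArwE.
have -> : S (add1 xi x) x = \sum_y c x y * alpha_shift alpha xi y *
                                  (f (add1 xi x) - f (add1 xi y)).
  apply: eq_bigr => y _; rewrite move_add1.
  by have [->|yx] := eqVneq y x; rewrite ?subrr ?mulr0 // add1_neq.
by rewrite -!mulrA.
Qed.
End Level.

Theorem lemma3p3 (R : realType) (V : finType) (c : V -> V -> R) (alpha : V -> R)
  (c_sym : forall x y, c x y = c y x) (c_ge0 : forall x y, 0 <= c x y)
  (c_conn : connected_graph c) (alpha_gt0 : forall x, 0 < alpha x)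
  (k : nat) (k_gt0 : (0 < k)%N) (f : conf V -> R)
  (hf : forall xi : conf V, nparts xi = k.-1 -> creation alpha f xi = 0) :
  k%:R * inf [set gapRW c (fun x => alpha x + (xi x)%:R)
                | xi in [set xi : conf V | nparts xi = k.-1]]
    * Var alpha k f
  <= energy c alpha k f.
Proof.
case: k k_gt0 hf => // k _ /= hf.
set G := inf _; set Z := sumXi k.+1 (weight alpha).
have beta_gt0 xi := alpha_shift_gt0 alpha_gt0 xi.
have G_le xi : nparts xi = k -> G <= gapRW c (alpha_shift alpha xi).
  move=> xi_k; apply: ge_inf; last by exists xi.
  by exists 0 => _ [xi' _ <-]; exact: gapRW_ge0 c_sym c_ge0 (beta_gt0 xi').
rewrite Var_confsE ?energy_confsE; last exact: sum_confs_mean0.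
rewrite mulrCA [k.+1%:R * G]mulrC -mulrA sum_confs_sqr mulr_sumr.
apply: ler_wpM2l.
  by rewrite invr_ge0 /Z sumXiE sumr_ge0 // => eta _; exact: weight_ge0.
rewrite !big_seq; apply: ler_sum => xi; rewrite mem_confs => /eqP xi_k.
rewrite mulrCA; apply: ler_wpM2l; first exact: weight_ge0.
have xi_mean0 := hf xi xi_k; rewrite creationE in xi_mean0.
apply: le_trans (poincare c_sym c_ge0 c_conn (beta_gt0 xi) xi_mean0).
apply: ler_wpM2r; last exact: G_le.
by apply: sumr_ge0 => x _; rewrite mulr_ge0 ?sqr_ge0 ?ltW.
Qed.
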